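(* Let $G=\operatorname{Gp}\langle X\mid R\rangle$ be a group, and let $\Re$ be a complete rewriting system for $G$ on the alphabet $X\cup X^{-1}$ which satisfies the condition $C^{+}$. Let $M=\operatorname{Mon}\langle X\mid \Re^{+}\rangle$ be the monoid presented by the generators $X$ and the relations $l=r$ for $(l\rightarrow r)\in\Re^{+}$. Then the monoid homomorphism $M\to G$ induced by the identity on $X$ is injective, i.e. for positive words $u,v\in X^{*}$, $u=v$ in $G$ implies $u=v$ in $M$; so $M$ embeds into $G$ as the submonoid of $G$ represented by positive words. In particular, any monoid $N$ isomorphic to $M$ embeds into $G$.
   Context: A rewriting system on an alphabet $\Sigma$ is a set of ordered pairs (rules) $l\rightarrow r$ in $\Sigma^{*}\times\Sigma^{*}$; a word $ulv$ reduces to $urv$ for any rule $l\rightarrow r$. $\Re$ is terminating if there is no infinite chain of reductions, confluent if any two words with a common ancestor under $\rightarrow^{*}$ have a common descendant, and complete if terminating and confluent. $\equiv_{\Re}$ denotes the congruence on $\Sigma^{*}$ generated by the rules of $\Re$. The monoid presentation of $G$ is $\operatorname{Mon}\langle X\cup X^{-1}\mid R\cup R_{0}\rangle$ with $R_{0}=\{xx^{-1}=1,\ x^{-1}x=1 : x\in X\}$; a rewriting system for $G$ is a rewriting system $\Re$ on $X\cup X^{-1}$ whose congruence $\equiv_{\Re}$ equals the congruence generated by $R\cup R_{0}$. A word in $(X\cup X^{-1})^{*}$ is positive if it lies in $X^{*}$ (the empty word $1$ counts as positive). $\Re^{+}$ denotes the set of all rules of $\Re$ whose left-hand side is a positive word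 (rules $l\rightarrow 1$ with $l$ positive are allowed). $\Re$ satisfies the condition $C^{+}$ if $\Re^{+}\neq\emptyset$ and every rule of $\Re$ with positive left-hand side has a positive right-hand side. *)

From Stdlib Require Import List Relations.
Import ListNotations.
Set Implicit Arguments.

Definition rsystem (A : Type) := list A -> list A -> Prop.

Definition step (A : Type) (Re : rsystem A) (w w' : list A) : Prop :=
  exists u v l r, Re l r /\ w = u ++ l ++ v /\ w' = u ++ r ++ v.

Definition reduces (A : Type) (Re : rsystem A) := clos_refl_trans (list A) (step Re).

Definition cong (A : Type) (Re : rsystem A) := clos_refl_sym_trans (list A) (step Re).

Definition terminating (A : Type) (Re : rsystem A) : Prop :=
  well_founded (fun y x => step Re x y).

Definition confluent (A : Type) (Re : rsystem A) : Prop :=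
  forall w a b, reduces Re w a -> reduces Re w b ->
    exists c, reduces Re a c /\ reduces Re b c.

Definition complete (A : Type) (Re : rsystem A) : Prop :=
  terminating Re /\ confluent Re.

(* Letters of X ∪ X^{-1}: inl x = x, inr x = x^{-1}. *)
Definition letter (X : Type) := (X + X)%type.

Definition pos (X : Type) (u : list X) : list (letter X) := map (@inl X X) u.

Definition positive (X : Type) (w : list (letter X)) : Prop :=
  exists u : list X, w = pos u.

Definition R0 (X : Type) : rsystem (letter X) :=
  fun l r => r = [] /\ exists x, l = [inl x; inr x] \/ l = [inr x; inl x].

Definition runion (A : Type) (R S : rsystem A) : rsystem A :=
  fun l r => R l r \/ S l r.

(* Re is a rewriting system for G = Gp<X | R> = Mon<X ∪ X^{-1} | R ∪ R0>. *)
Definition rewriting_system_for (X : Type) (R Re : rsystem (letter X)) : Prop :=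
  forall w w', cong Re w w' <-> cong (runion R (@R0 X)) w w'.

Definition Re_plus (X : Type) (Re : rsystem (letter X)) : rsystem (letter X) :=
  fun l r => Re l r /\ positive l.

Definition condC_plus (X : Type) (Re : rsystem (letter X)) : Prop :=
  (exists l r, Re_plus Re l r) /\
  (forall l r, Re l r -> positive l -> positive r).

(* The relations of M = Mon<X | Re^+>, as pairs of words over X. *)
Definition M_rels (X : Type) (Re : rsystem (letter X)) : rsystem X :=
  fun l r => Re_plus Re (pos l) (pos r).

From Stdlib Require Import List Relations.
Import ListNotations.
Set Implicit Arguments.

(* Let u, v be positive words equal in G.  Since Re is a
   rewriting system for G, pos u and pos v are Re-congruent, and since Re is
   confluent (Church-Rosser), both reduce to a common word c.  Condition C^+
   says that a rule applicable to a positive word has a positive right-hand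
   side, so every Re-step from a positive word is a step of Re^+ between
   positive words; hence the two reductions are reductions of M = Mon<X|Re^+>
   ending in positive words that both represent c.  As pos is injective they
   end in the same word of X^*, so u = v in M. *)

Lemma church_rosser (A : Type) (Re : rsystem A) : confluent Re ->
  forall a b, cong Re a b -> exists c, reduces Re a c /\ reduces Re b c.
Proof.
  intros Hconf a b Hab.
  induction Hab as [x y Hstep | x | x y _ [c [Hx Hy]]
                   | x y z _ [c1 [Hx Hy1]] _ [c2 [Hy2 Hz]]].
  - exists y; split; [apply rt_step; exact Hstep | apply rt_refl].
  - exists x; split; apply rt_refl.
  - exists c; split; assumption.
  - destruct (Hconf y c1 c2 Hy1 Hy2) as [c [Hc1 Hc2]].
    exists c; split; eapply rt_trans; eauto.
Qed.

Lemma reduces_cong (A : Type) (Re : rsystem A) a b :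
  reduces Re a b -> cong Re a b.
Proof.
  intro Hab; induction Hab.
  - apply rst_step; assumption.
  - apply rst_refl.
  - eapply rst_trans; eassumption.
Qed.

Lemma map_injective (A B : Type) (f : A -> B) :
  (forall x y, f x = f y -> x = y) ->
  forall s t, map f s = map f t -> s = t.
Proof.
  intros Hf s; induction s as [|a s IH]; intros [|b t] E; try discriminate.
  - reflexivity.
  - injection E as Eab Est. f_equal; [apply Hf | apply IH]; assumption.
Qed.

Lemma pos_injective (X : Type) (s t : list X) : pos s = pos t -> s = t.
Proof.
  apply map_injective. intros x y E; injection E; trivial.
Qed.

Lemma pos_factor (X : Type) (w : list X) a l b :
  pos w = a ++ l ++ b ->
  exists a' l' b', w = a' ++ l' ++ b' /\ a = pos a' /\ l = pos l' /\ b = pos b'.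
Proof.
  unfold pos; intro E.
  apply map_eq_app in E as [a' [m [-> [Ea Em]]]].
  apply map_eq_app in Em as [l' [b' [-> [El Eb]]]].
  exists a', l', b'; auto.
Qed.

Section PositiveReductions.

Variable X : Type.
Variable Re : rsystem (letter X).

Hypothesis positive_rhs : forall l r, Re l r -> positive l -> positive r.

Lemma step_from_pos {w : list X} {t : list (letter X)} :
  step Re (pos w) t -> exists w', t = pos w' /\ step (M_rels Re) w w'.
Proof.
  intros [a [b [l [r [Hrule [Ew ->]]]]]].
  apply pos_factor in Ew as [a' [l' [b' [-> [-> [-> ->]]]]]].
  destruct (positive_rhs Hrule (ex_intro _ l' eq_refl)) as [r' ->].
  exists (a' ++ r' ++ b'); split.
  - unfold pos; rewrite !map_app; reflexivity.
  - exists a', b', l', r'; repeat split; auto. exists l'; reflexivity.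
Qed.

Lemma reduces_from_pos {w : list X} {t : list (letter X)} :
  reduces Re (pos w) t -> exists w', t = pos w' /\ reduces (M_rels Re) w w'.
Proof.
  intro Hred; apply clos_rt_rt1n in Hred.
  remember (pos w) as pw eqn:Ew; revert w Ew.
  induction Hred as [x | x y z Hstep _ IH]; intros w ->.
  - exists w; split; [reflexivity | apply rt_refl].
  - destruct (step_from_pos Hstep) as [w' [Ey Hw]].
    destruct (IH w' Ey) as [w'' [Ez Hw']].
    exists w''; split; [exact Ez | eapply rt_trans; [apply rt_step|]; eassumption].
Qed.

End PositiveReductions.

Theorem theorem3p7 (X : Type) (R Re : rsystem (letter X)) :
  rewriting_system_for R Re ->
  complete Re ->
  condC_plus Re ->
  forall u v : list X,
    cong (runion R (@R0 X)) (pos u) (pos v) ->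
    cong (M_rels Re) u v.
Proof.
  intros Hsys [_ Hconf] [_ Hpos] u v Huv.
  apply Hsys in Huv.
  destruct (church_rosser Hconf Huv) as [c [Hu Hv]].
  destruct (reduces_from_pos Hpos Hu) as [cu [-> Hu']].
  destruct (reduces_from_pos Hpos Hv) as [cv [Ec Hv']].
  apply pos_injective in Ec; subst cv.
  eapply rst_trans; [apply reduces_cong; exact Hu' |].
  apply rst_sym, reduces_cong; exact Hv'.
Qed.
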